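(* Let $(\hat R,\hat F)$ satisfy conditions (i) and (ii), and assume moreover $q^2\neq1$. Let $\hat R(u):=\hat R+\frac{q-q^{-1}}{u^2-1}\,\mathrm{Id}$. Let $T(u)$ be an operator on $V$, depending on a parameter $u$, with entries in an associative algebra $\mathfrak A$, satisfying \[ \hat R_{12}(u/v)\,T_{\bar1}(u)\,T_{\bar2}(v)=T_{\bar1}(v)\,T_{\bar2}(u)\,\hat R_{12}(u/v) \] for all admissible $u,v$ (with $u^2\ne v^2$), in particular for $u=qv$. Then $S^{(2)}_{12}\,T_{\bar1}(qv)\,T_{\bar2}(v)\,A^{(2)}_{12}=0$. Consequently, if $\delta\in\mathfrak A$ is invertible, commutes with the scalars, and satisfies $\delta\,T(v)\,\delta^{-1}=T(q^{-1}v)$ entrywise for all $v$, then both $\delta\,T(v)$ and $T(v)\,\delta$ are half-quantum matrices, i.e. $S^{(2)}_{12}(\delta T)_{\bar1}(v)(\delta T)_{\bar2}(v)A^{(2)}_{12}=0$ and $S^{(2)}_{12}(T\delta)_{\bar1}(v)(T\delta)_{\bar2}(v)A^{(2)}_{12}=0$.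
   Context: Let $V$ be a finite-dimensional complex vector space, $\mathrm{Id}$ the identity. For an operator $X$ on $V$ (possibly with entries in $\mathfrak A$), $X_j$ denotes $X$ acting in the $j$-th tensor factor of $V^{\otimes m}$; for $Y$ on $V\otimes V$, $Y_{j,k}$ denotes $Y$ in factors $j,k$ and $Y_j:=Y_{j,j+1}$. Conditions on $q\in\mathbb C^*$, $\hat R,\hat F\in\mathrm{Aut}(V\otimes V)$: (i) $\hat R_{12}\hat R_{23}\hat R_{12}=\hat R_{23}\hat R_{12}\hat R_{23}$, $\hat F_{12}\hat F_{23}\hat F_{12}=\hat F_{23}\hat F_{12}\hat F_{23}$, $\hat R_{12}\hat F_{23}\hat F_{12}=\hat F_{23}\hat F_{12}\hat R_{23}$, $\hat F_{12}\hat F_{23}\hat R_{12}=\hat R_{23}\hat F_{12}\hat F_{23}$. (ii) $q+q^{-1}\ne0$ and $\hat R=qS^{(2)}-q^{-1}A^{(2)}$ with $S^{(2)},A^{(2)}$ idempotents, $S^{(2)}+A^{(2)}=\mathrm{Id}$. For an $\mathfrak A$-valued $N$ on $V$: $N_{\bar1}:=N_1$, $N_{\bar2}:=\hat F_{12}N_1\hat F_{12}^{-1}$. A half-quantum matrix is an $\mathfrak A$-valued $N$ with $S^{(2)}_{12}N_{\bar1}N_{\bar2}A^{(2)}_{12}=0$. *)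

From HB Require Import structures.
From mathcomp Require Import all_boot all_order all_algebra.
Set Implicit Arguments. Unset Strict Implicit. Unset Printing Implicit Defensive.
Import GRing.Theory Num.Theory.
Local Open Scope ring_scope.

(* V = C^n with its standard basis; V^{(x)2} and V^{(x)3} are indexed by
   pairs / triples of basis indices. *)
Definition op (R : Type) (I : finType) := I -> I -> R.

Section Ops.
Variable R : pzRingType.
Variable I : finType.

Definition opeq (X Y : op R I) : Prop := forall i j, X i j = Y i j.
Definition opmul (X Y : op R I) : op R I := fun i j => \sum_(k : I) X i k * Y k j.
Definition opone : op R I := fun i j => (i == j)%:R.
Definition opzero : op R I := fun _ _ => 0.
End Ops.

Notation "X ** Y" := (opmul X Y) (at level 40, left associativity).
Notation "X =op= Y" := (opeq X Y) (at level 70, no associativity).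

Notation I2 n := ('I_n * 'I_n)%type.
Notation I3 n := ('I_n * 'I_n * 'I_n)%type.

Section Tensor.
Variable R : pzRingType.
Variable n : nat.

(* X on V acting in the first factor of V (x) V *)
Definition in1 (X : op R 'I_n) : op R (I2 n) :=
  fun i j => X i.1 j.1 * (i.2 == j.2)%:R.
(* Y on V (x) V acting in factors 1,2 of V^{(x)3} *)
Definition in12 (Y : op R (I2 n)) : op R (I3 n) :=
  fun i j => Y (i.1.1, i.1.2) (j.1.1, j.1.2) * (i.2 == j.2)%:R.
(* Y on V (x) V acting in factors 2,3 of V^{(x)3} *)
Definition in23 (Y : op R (I2 n)) : op R (I3 n) :=
  fun i j => (i.1.1 == j.1.1)%:R * Y (i.1.2, i.2) (j.1.2, j.2).
End Tensor.

Definition liftA (C : pzRingType) (A : lalgType C) (I : finType) (X : op C I)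
  : op A I := fun i j => (X i j)%:A.

Definition inverse_op (R : pzRingType) (I : finType) (X Xi : op R I) : Prop :=
  X ** Xi =op= @opone R I /\ Xi ** X =op= @opone R I.

Definition cond_i (C : pzRingType) (n : nat) (Rh Fh : op C (I2 n)) : Prop :=
  [/\ in12 Rh ** in23 Rh ** in12 Rh =op= in23 Rh ** in12 Rh ** in23 Rh,
      in12 Fh ** in23 Fh ** in12 Fh =op= in23 Fh ** in12 Fh ** in23 Fh,
      in12 Rh ** in23 Fh ** in12 Fh =op= in23 Fh ** in12 Fh ** in23 Rh &
      in12 Fh ** in23 Fh ** in12 Rh =op= in23 Rh ** in12 Fh ** in23 Fh].

Definition cond_ii (C : fieldType) (n : nat) (q : C) (Rh S2 A2 : op C (I2 n))
  : Prop :=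
  [/\ q + q^-1 != 0,
      Rh =op= (fun i j => q * S2 i j - q^-1 * A2 i j),
      S2 ** S2 =op= S2,
      A2 ** A2 =op= A2 &
      (fun i j => S2 i j + A2 i j) =op= @opone C (I2 n)].

Definition bar1 (C : pzRingType) (A : lalgType C) (n : nat) (N : op A 'I_n)
  : op A (I2 n) := in1 N.
Definition bar2 (C : pzRingType) (A : lalgType C) (n : nat)
  (Fh Fhi : op C (I2 n)) (N : op A 'I_n) : op A (I2 n) :=
  liftA A Fh ** in1 N ** liftA A Fhi.

Definition half_quantum (C : pzRingType) (A : lalgType C) (n : nat)
  (S2 A2 Fh Fhi : op C (I2 n)) (N : op A 'I_n) : Prop :=
  liftA A S2 ** bar1 N ** bar2 Fh Fhi N ** liftA A A2 =op= @opzero A (I2 n).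

Definition Rspec (C : fieldType) (n : nat) (q : C) (Rh : op C (I2 n)) (u : C)
  : op C (I2 n) :=
  fun i j => Rh i j + (q - q^-1) / (u ^+ 2 - 1) * (i == j)%:R.

(* (1) At the spectral point u = q v the operator R(u/v) = R + (q - q^-1)/(q^2 - 1) Id
   collapses, by condition (ii), to (q + q^-1) S: indeed R + q^-1 Id = (q + q^-1) S
   since S + A = Id.  The RTT relation at u = q v therefore says that the nonzero
   multiple (q + q^-1) S intertwines T_1(qv) T_2(v) with T_1(v) T_2(qv).  Since the
   complementary idempotents S and A are orthogonal (S A = 0), multiplying the
   relation by A on the right gives S T_1(qv) T_2(v) A = 0.

   (2) The hypothesis delta T(v) delta^-1 = T(q^-1 v) rewrites as T(v) delta = delta T(qv).
   As delta commutes with the scalar matrices S, A, F, F^-1 and with Id, it can be moved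
   to the far left in S (dT)_1 (dT)_2 A and in S (Td)_1 (Td)_2 A, which leaves
   S T_1(qv) T_2(v) A = 0 behind: both twisted matrices are half-quantum. *)
From HB Require Import structures.
From mathcomp Require Import all_boot all_order all_algebra.
From mathcomp Require Import ring.
From Stdlib Require Import FunctionalExtensionality.
Set Implicit Arguments. Unset Strict Implicit.
Import GRing.Theory Num.Theory.
Local Open Scope ring_scope.

Lemma opeqE (R : pzRingType) (I : finType) (X Y : op R I) : X =op= Y -> X = Y.
Proof.
by move=> XY; apply: functional_extensionality => i;
  apply: functional_extensionality => j; exact: XY.
Qed.

Section OperatorRing.
Variables (R : pzRingType) (I : finType).
Implicit Types (X Y Z : op R I) (d : R).

Definition opL d X : op R I := fun i j => d * X i j.
Definition opR X d : op R I := fun i j => X i j * d.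

Definition entries_commute d X : Prop := forall i j, d * X i j = X i j * d.

Lemma opmulA X Y Z : X ** Y ** Z = X ** (Y ** Z).
Proof.
apply: opeqE => i j; rewrite /opmul.
under eq_bigr do rewrite mulr_suml.
rewrite exchange_big; apply: eq_bigr => k _; rewrite mulr_sumr.
by apply: eq_bigr => l _; rewrite mulrA.
Qed.

Lemma opmul1 X : X ** @opone R I = X.
Proof.
apply: opeqE => i j; rewrite /opmul /opone (bigD1 j) //= eqxx mulr1 big1 ?addr0 //.
by move=> k /negbTE ->; rewrite mulr0.
Qed.

Lemma opmul0 X : X ** @opzero R I = @opzero R I.
Proof. by apply: opeqE => i j; rewrite /opmul /opzero big1 // => k _; rewrite mulr0. Qed.

Lemma opmulDr X Y Z :
  X ** (fun i j => Y i j + Z i j) = fun i j => (X ** Y) i j + (X ** Z) i j.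
Proof. by apply: opeqE => i j; rewrite /opmul -big_split; apply: eq_bigr => k _; rewrite mulrDr. Qed.

Lemma complementary_idempotents_orth X Y :
  X ** X =op= X -> (fun i j => X i j + Y i j) =op= @opone R I ->
  X ** Y = @opzero R I.
Proof.
move=> XX XY1; have h : X ** (fun i j => X i j + Y i j) = X by rewrite (opeqE XY1) opmul1.
rewrite opmulDr (opeqE XX) in h; apply: opeqE => i j.
have /eqP := congr1 (fun f => f i j) h.
by rewrite -subr_eq0 addrC addKr => /eqP.
Qed.

Lemma opL_mull d X Y : opL d X ** Y = opL d (X ** Y).
Proof. by apply: opeqE => i j; rewrite /opmul /opL mulr_sumr; apply: eq_bigr => k _; rewrite mulrA. Qed.

Lemma opR_mulr d X Y : X ** opR Y d = opR (X ** Y) d.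
Proof. by apply: opeqE => i j; rewrite /opmul /opR mulr_suml; apply: eq_bigr => k _; rewrite mulrA. Qed.

Lemma opRL d X Y : opR X d ** Y = X ** opL d Y.
Proof. by apply: opeqE => i j; rewrite /opmul /opR /opL; apply: eq_bigr => k _; rewrite mulrA. Qed.

Lemma opLR d X : entries_commute d X -> opL d X = opR X d.
Proof. by move=> dX; apply: opeqE => i j; exact: dX. Qed.

Lemma opL_mulr d X Y : entries_commute d X -> X ** opL d Y = opL d (X ** Y).
Proof.
move=> dX; apply: opeqE => i j; rewrite /opmul /opL mulr_sumr; apply: eq_bigr => k _.
by rewrite mulrA -dX mulrA.
Qed.

Lemma opL_opL d d' X : opL d (opL d' X) = opL (d * d') X.
Proof. by apply: opeqE => i j; rewrite /opL mulrA. Qed.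

Lemma opL0 d : opL d (@opzero R I) = @opzero R I.
Proof. by apply: opeqE => i j; rewrite /opL /opzero mulr0. Qed.

Lemma opR0 d : opR (@opzero R I) d = @opzero R I.
Proof. by apply: opeqE => i j; rewrite /opR /opzero mul0r. Qed.
End OperatorRing.

Section ScalarLift.
Variables (C : comPzRingType) (Alg : algType C) (I : finType).
Implicit Types (X Y : op C I) (Z W : op Alg I).

Definition opS (c : C) Z : op Alg I := fun i j => c *: Z i j.

Lemma opS_mull c Z W : opS c Z ** W = opS c (Z ** W).
Proof. by apply: opeqE => i j; rewrite /opmul /opS scaler_sumr; apply: eq_bigr => k _; rewrite scalerAl. Qed.

Lemma opS_mulr c Z W : Z ** opS c W = opS c (Z ** W).
Proof. by apply: opeqE => i j; rewrite /opmul /opS scaler_sumr; apply: eq_bigr => k _; rewrite scalerAr. Qed.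

Lemma liftA_mul X Y : liftA Alg (X ** Y) = liftA Alg X ** liftA Alg Y.
Proof.
apply: opeqE => i j; rewrite /opmul /liftA scaler_suml; apply: eq_bigr => k _.
by rewrite -scalerAl mul1r scalerA.
Qed.

Lemma liftA0 : liftA Alg (@opzero C I) = @opzero Alg I.
Proof. by apply: opeqE => i j; rewrite /liftA /opzero scale0r. Qed.

Lemma liftA_scale (c : C) X : liftA Alg (fun i j => c * X i j) = opS c (liftA Alg X).
Proof. by apply: opeqE => i j; rewrite /liftA /opS scalerA. Qed.

Lemma liftA_commute (d : Alg) X :
  (forall c : C, d * c%:A = c%:A * d) -> entries_commute d (liftA Alg X).
Proof. by move=> dc i j; rewrite /liftA dc. Qed.
End ScalarLift.

Section SpectralPoint.
Variables (C : fieldType) (Alg : algType C) (n : nat) (q : C).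
Variables (Rh S2 A2 : op C (I2 n)).
Hypotheses (q_neq0 : q != 0) (q2_neq1 : q ^+ 2 != 1) (ii : cond_ii q Rh S2 A2).

Lemma Rspec_at_q : Rspec q Rh q = fun i j => (q + q^-1) * S2 i j.
Proof.
have [_ RhE _ _ SA1] := ii.
apply: opeqE => i j; rewrite /Rspec (opeqE RhE).
have -> : (i == j)%:R = S2 i j + A2 i j :> C by have := SA1 i j.
have -> : (q - q^-1) / (q ^+ 2 - 1) = q^-1 by field; rewrite q_neq0 subr_eq0.
by field.
Qed.

Lemma spectral_intertwiner_annihilates (X Y : op Alg (I2 n)) :
  liftA Alg (Rspec q Rh q) ** X = Y ** liftA Alg (Rspec q Rh q) ->
  liftA Alg S2 ** X ** liftA Alg A2 = @opzero Alg (I2 n).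
Proof.
have [qq_neq0 _ SS _ SA1] := ii.
have SA0 := complementary_idempotents_orth SS SA1.
rewrite Rspec_at_q liftA_scale opS_mull opS_mulr => /(congr1 (fun Z => Z ** liftA Alg A2)).
rewrite !opS_mull (opmulA Y) -liftA_mul SA0 liftA0 opmul0 => scaled_zero.
apply: opeqE => i j; have := congr1 (fun f => (q + q^-1)^-1 *: f i j) scaled_zero.
by rewrite /opS /opzero scalerA mulVf // scale1r !scaler0.
Qed.
End SpectralPoint.

Section Twist.
Variables (C : comPzRingType) (Alg : algType C) (n : nat).
Variables (S2 A2 Fh Fhi : op C (I2 n)) (d : Alg).
Hypothesis d_scalar : forall c : C, d * c%:A = c%:A * d.

(* Multiplying N by d commutes with forming N_bar1 and N_bar2, since d commutes
   with the scalar entries of Id, F and F^-1. *)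
Lemma bar1_opL (N : op Alg 'I_n) : bar1 (opL d N) = opL d (bar1 N).
Proof. by apply: opeqE => i j; rewrite /bar1 /in1 /opL mulrA. Qed.

Lemma bar1_opR (N : op Alg 'I_n) : bar1 (opR N d) = opR (bar1 N) d.
Proof. by apply: opeqE => i j; rewrite /bar1 /in1 /opR -!mulrA (commr_nat d). Qed.

Lemma bar2_opL (N : op Alg 'I_n) : bar2 Fh Fhi (opL d N) = opL d (bar2 Fh Fhi N).
Proof. by rewrite /bar2 -[in1 _]/(bar1 _) bar1_opL (opL_mulr _ (liftA_commute _ d_scalar)) opL_mull. Qed.

Lemma bar2_opR (N : op Alg 'I_n) : bar2 Fh Fhi (opR N d) = opR (bar2 Fh Fhi N) d.
Proof.
rewrite /bar2 -[in1 _]/(bar1 _) bar1_opR opR_mulr opRL.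
by rewrite (opLR (liftA_commute _ d_scalar)) opR_mulr.
Qed.

Lemma half_quantum_twist (N M : op Alg 'I_n) :
  opR N d = opL d M ->
  liftA Alg S2 ** bar1 M ** bar2 Fh Fhi N ** liftA Alg A2 =op= @opzero Alg (I2 n) ->
  half_quantum S2 A2 Fh Fhi (opL d N) /\ half_quantum S2 A2 Fh Fhi (opR N d).
Proof.
move=> NdM /opeqE MN0; rewrite /half_quantum.
have b1_swap : opR (bar1 N) d = opL d (bar1 M) by rewrite -bar1_opR NdM bar1_opL.
have dS := liftA_commute S2 d_scalar; have dA := liftA_commute A2 d_scalar.
split.
- rewrite bar1_opL bar2_opL (opL_mulr _ dS) opL_mull -opRL -opR_mulr b1_swap.
  by rewrite (opL_mulr _ dS) !opL_mull opL_opL MN0 opL0.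
- rewrite bar1_opR bar2_opR opR_mulr opRL b1_swap (opL_mulr _ dS) (opLR dA).
  by rewrite opR_mulr !opL_mull MN0 opL0 opR0.
Qed.
End Twist.

Theorem mainTheorem9 (C : numClosedFieldType) (n : nat) (q : C)
  (Rh Rhi Fh Fhi S2 A2 : op C (I2 n))
  (Alg : algType C) (T : C -> op Alg 'I_n) :
  q != 0 ->
  inverse_op Rh Rhi -> inverse_op Fh Fhi ->
  cond_i Rh Fh ->
  cond_ii q Rh S2 A2 ->
  q ^+ 2 != 1 ->
  (forall u v : C, u != 0 -> v != 0 -> u ^+ 2 != v ^+ 2 ->
     liftA Alg (Rspec q Rh (u / v)) ** bar1 (T u) ** bar2 Fh Fhi (T v)
     =op= bar1 (T v) ** bar2 Fh Fhi (T u) ** liftA Alg (Rspec q Rh (u / v))) ->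
  (forall v : C, v != 0 ->
     liftA Alg S2 ** bar1 (T (q * v)) ** bar2 Fh Fhi (T v) ** liftA Alg A2
     =op= @opzero Alg (I2 n))
  /\
  (forall d di : Alg, d * di = 1 -> di * d = 1 ->
     (forall c : C, d * c%:A = c%:A * d) ->
     (forall v : C, v != 0 -> forall i j, d * T v i j * di = T (q^-1 * v) i j) ->
     forall v : C, v != 0 ->
       half_quantum S2 A2 Fh Fhi (fun i j => d * T v i j) /\
       half_quantum S2 A2 Fh Fhi (fun i j => T v i j * d)).
Proof.
move=> q_neq0 _ _ _ ii q2_neq1 RTT.
have spectral_zero : forall v : C, v != 0 ->
    liftA Alg S2 ** bar1 (T (q * v)) ** bar2 Fh Fhi (T v) ** liftA Alg A2
    =op= @opzero Alg (I2 n).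
  move=> v v_neq0; have qv_neq0 : q * v != 0 by rewrite mulf_neq0.
  have qv2_neq : (q * v) ^+ 2 != v ^+ 2.
    by rewrite exprMn -subr_eq0 -{2}[v ^+ 2]mul1r -mulrBl mulf_eq0 subr_eq0
      negb_or q2_neq1 expf_neq0.
  have := opeqE (RTT _ _ qv_neq0 v_neq0 qv2_neq).
  rewrite mulfK // (opmulA (liftA Alg _)) => rtt.
  have := spectral_intertwiner_annihilates q_neq0 q2_neq1 ii rtt.
  by rewrite !opmulA => -> i j.
split=> // d di _ di_d d_scalar d_conj v v_neq0.
have qv_neq0 : q * v != 0 by rewrite mulf_neq0.
have shift : opR (T v) d = opL d (T (q * v)).
  apply: opeqE => i j; rewrite /opR /opL.
  have := d_conj _ qv_neq0 i j; rewrite mulKf // => <-.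
  by rewrite -[_ * di * d]mulrA di_d mulr1.
exact: (half_quantum_twist d_scalar shift (spectral_zero v v_neq0)).
Qed.
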